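(* Let $X$ be a compact metrizable space and let $\mathcal F=\{f_1,\dots,f_m\}$ and $\mathcal G=\{g_1,\dots,g_m\}$ be Markov maps on $X$ with respect to partitions $\mathcal A=\{A_1,\dots,A_m\}$ and $\mathcal B=\{B_1,\dots,B_m\}$ respectively. Suppose both are topologically expanding and that they are combinatorially conjugate. Then they are topologically conjugate: there is a homeomorphism $H:X\to X$ with $H\circ f_i(x)=g_i\circ H(x)$ for all $x\in A_i$ and all $i\in\{1,\dots,m\}$.
   Context: A partition of $X$ is a finite family $\mathcal A=\{A_1,\dots,A_m\}$ of closed connected subsets with $A_i\cap A_j$ finite for $i\ne j$ and $\bigcup A_i=X$; its break-points are $\mathrm{bk}(\mathcal A)=\{x: x\in A_i\cap A_j \text{ for some } i\ne j\}$. A Markov map with respect to $\mathcal A$ is a family $\mathcal F=\{f_i\}$ of homeomorphisms $f_i:A_i\to f_i(A_i)\subseteq X$ (not required to agree on overlaps) such that each $f_i(A_i)$ is a union of members of $\mathcal A$ and $f_i(A_i\cap\mathrm{bk}(\mathcal A))\subseteq\mathrm{bk}(\mathcal A)$. Level-$n$ pieces are defined inductively: $\mathcal A^0=\mathcal A$, and $\mathcal A^{n}$ consists of the sets $(f_i|_{A_i})^{-1}(B)$ with $B\in\mathcal A^{n-1}$, $B\subseteq f_i(A_i)$. $\mathcal F$ is topologically expanding if for every $x\in X$ the sets $\mathrm{Int}\big(\bigcup\{A\in\mathcal A^n: x\in A\}\big)$, $n\in\mathbb N$, form a neighborhood basis of $x$. $\mathcal F$ and $\mathcal G$ are combinatorially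 conjugate if there is a homeomorphism $H:X\to X$ with $H(A_i)=B_i$ for all $i$, $H\circ f_i(x)=g_i\circ H(x)$ for every break-point $x\in A_i\cap\mathrm{bk}(\mathcal A)$, and the same Markov matrix: $A_j\subseteq f_i(A_i)$ iff $B_j\subseteq g_i(B_i)$. *)

From HB Require Import structures.
From mathcomp Require Import all_boot all_order all_algebra.
From mathcomp Require Import all_classical all_reals all_analysis.
Set Implicit Arguments. Unset Strict Implicit. Unset Printing Implicit Defensive.
Import Order.TTheory GRing.Theory Num.Theory.
Local Open Scope classical_set_scope.

Section MarkovDefs.
Context {X : topologicalType} {m : nat}.

Definition is_partition (A : 'I_m -> set X) : Prop :=
  (forall i, closed (A i)) /\ (forall i, connected (A i)) /\
  (forall i j, i != j -> finite_set (A i `&` A j)) /\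
  \bigcup_(i in [set: 'I_m]) A i = [set: X].

Definition bk (A : 'I_m -> set X) : set X :=
  [set x | exists i j, i != j /\ A i x /\ A j x].

Definition homeo_onto (S : set X) (f : X -> X) : Prop :=
  {within S, continuous f} /\
  exists g : X -> X, {within f @` S, continuous g} /\ (forall x, S x -> g (f x) = x).

Definition is_markov (A : 'I_m -> set X) (f : 'I_m -> X -> X) : Prop :=
  (forall i, homeo_onto (A i) (f i)) /\
  (forall i, exists J : set 'I_m, f i @` A i = \bigcup_(j in J) A j) /\
  (forall i, f i @` (A i `&` bk A) `<=` bk A).

Fixpoint pieces (A : 'I_m -> set X) (f : 'I_m -> X -> X) (n : nat) : set (set X) :=
  match n with
  | 0 => [set P | exists i, P = A i]
  | n'.+1 => [set P | exists i, exists2 B, pieces A f n' B &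
                B `<=` f i @` A i /\ P = A i `&` (f i @^-1` B)]
  end.

Definition top_expanding (A : 'I_m -> set X) (f : 'I_m -> X -> X) : Prop :=
  forall x : X,
    let U n := interior (\bigcup_(P in [set P | pieces A f n P /\ P x]) P) in
    (forall n, nbhs x (U n)) /\
    (forall V, nbhs x V -> exists n, U n `<=` V).

Definition homeomorphism (H : X -> X) : Prop :=
  continuous H /\ exists K : X -> X, continuous K /\ cancel H K /\ cancel K H.

Definition comb_conjugate (A B : 'I_m -> set X) (f g : 'I_m -> X -> X) : Prop :=
  exists H : X -> X, homeomorphism H /\
    (forall i, H @` A i = B i) /\
    (forall i x, A i x -> bk A x -> H (f i x) = g i (H x)) /\
    (forall i j, (A j `<=` f i @` A i) <-> (B j `<=` g i @` B i)).

End MarkovDefs.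

(* A point x is described by its itinerary: the admissible words w for which x
   lies in the cylinder A_{i0} ∩ f_{i0}^{-1} A_{i1} ∩ ...  The conjugacy sends x
   to the point whose B-cylinders with the same words contain it.  Such a point
   exists by compactness: finite approximations are obtained by pulling the
   combinatorial conjugacy back along inverse branches of g, which is legitimate
   because it already conjugates f to g at the break-points.  It is unique
   because level-n pieces shrink to points under topological expansion: a
   piece is either degenerate or a connected cylinder meeting the other pieces
   in finitely many points, and off those points it lies in the interior of the
   union of the pieces through a given point.  The same uniform shrinking gives
   continuity, and the map built from the inverse conjugacy is a two-sided
   inverse, since a map preserving every cylinder is the identity. *)

From mathcomp Require Import all_boot all_order all_algebra.
From mathcomp Require Import all_classical all_reals all_analysis.
Import Num.Theory.
Local Open Scope classical_set_scope.

Section AccessibleConnected.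
Context {T : topologicalType}.
Hypothesis T1 : accessible_space T.

(* In a T1 space finite sets are closed, so q is isolated in Q. *)
Lemma connected_open_finiteI_set1 (Q O : set T) q :
  connected Q -> open O -> finite_set (Q `&` O) -> Q q -> O q -> Q = [set q].
Proof.
move=> cQ oO fQO Qq Oq.
have clF : closed ((Q `&` O) `\ q).
  by apply: (proj1 accessible_finite_set_closed T1); exact: finite_setD.
apply/esym/cQ; first by exists q.
- exists (O `&` ~` ((Q `&` O) `\ q)); first exact/openI/closed_openC.
  apply/seteqP; split=> [z -> | z [Qz [Oz nF]]].
    by split=> //; split=> // -[_ /(_ erefl)].
  by apply: contrapT => nzq; apply: nF.
- exists [set q]; first exact: accessible_closed_set1.
  by apply/seteqP; split=> [z -> | z [Qz ->]].
Qed.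

Lemma connected_finite_subset1 (Q : set T) :
  connected Q -> finite_set Q -> is_subset1 Q.
Proof.
move=> cQ fQ a b Qa Qb.
have fQT : finite_set (Q `&` [set: T]) by rewrite setIT.
by move: Qb; rewrite (connected_open_finiteI_set1 _ _ _ cQ openT fQT Qa I) => ->.
Qed.

End AccessibleConnected.

Lemma compact_nested_closed {T : topologicalType} (C : nat -> set T) :
  compact [set: T] -> (forall n, closed (C n)) ->
  (forall n, C n.+1 `<=` C n) -> (forall n, C n !=set0) ->
  exists y, forall n, C n y.
Proof.
move=> cT clC decC neC.
have monoC n k : (n <= k)%N -> C k `<=` C n.
  move=> /subnK <-; elim: (k - n)%N => [|d IH] //=.
  by rewrite addSn; exact: subset_trans (decC _) IH.
pose F := filter_from [set: nat] C.
have FF : ProperFilter F.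
  apply: filter_from_proper; last by move=> i _; exact: neC.
  apply: filter_from_filter; first by exists 0%N.
  move=> i j _ _; exists (maxn i j) => // z Cz.
  by split; apply: (monoC _ (maxn i j)); rewrite ?leq_maxl ?leq_maxr.
have [y [_ cly]] := cT _ FF (ex_intro2 _ _ 0%N I (fun _ _ => I)).
by exists y => n; apply: (clC n) => U nU; apply: cly => //; exists n.
Qed.

Lemma comb_conjugate_sym {X : topologicalType} {m : nat}
    {A B : 'I_m -> set X} {f g : 'I_m -> X -> X} :
  comb_conjugate A B f g -> comb_conjugate B A g f.
Proof.
move=> [H [[cH [K [cK [HK KH]]]] [HA [Hbk Hmat]]]].
have KB i : K @` B i = A i.
  rewrite -HA; apply/seteqP; split=> [_ [_ [x Ax <-] <-] | x Ax].
    by rewrite HK.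
  by exists (H x); [exists x | rewrite HK].
exists K; split; first by split=> //; exists H.
split=> //; split=> [i y By [i1 [j1 [ij [B1y B2y]]]] | i j]; last first.
  by split=> /Hmat.
have AKy : A i (K y) by rewrite -KB; exists y.
have bKy : bk A (K y).
  by exists i1, j1; split=> //; rewrite -!KB; split; exists y.
by rewrite -[in LHS](KH y) -Hbk // HK.
Qed.

Fixpoint cyl {X : Type} {m : nat} (A : 'I_m -> set X) (f : 'I_m -> X -> X)
    (i : 'I_m) (w : seq 'I_m) : set X :=
  if w is j :: w' then A i `&` f i @^-1` cyl A f j w' else A i.

Fixpoint admissible {X : Type} {m : nat} (A : 'I_m -> set X)
    (f : 'I_m -> X -> X) (i : 'I_m) (w : seq 'I_m) : Prop :=
  if w is j :: w' then (A j `<=` f i @` A i) /\ admissible A f j w' else True.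

Section MarkovMap.
Context {R : realType} {X : pseudoMetricType R} {m : nat}.
Context {A : 'I_m -> set X} {f : 'I_m -> X -> X}.
Hypotheses (hX : hausdorff_space X) (cX : compact [set: X]).
Hypotheses (pA : is_partition A) (mA : is_markov A f).

Definition branch_inv (i : 'I_m) : X -> X := sval (cid ((proj1 mA) i).2).

Lemma branch_invK {i x} : A i x -> branch_inv i (f i x) = x.
Proof. by rewrite /branch_inv; case: cid => h /= [_]; apply. Qed.

Lemma continuous_branch_inv i : {within f i @` A i, continuous (branch_inv i)}.
Proof. by rewrite /branch_inv; case: cid => h /= []. Qed.

Lemma branch_invV {i y} : (f i @` A i) y -> f i (branch_inv i y) = y.
Proof. by case=> x Ax <-; rewrite branch_invK. Qed.

Lemma branch_inv_mem {i y} : (f i @` A i) y -> A i (branch_inv i y).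
Proof. by case=> x Ax <-; rewrite branch_invK. Qed.

Lemma branch_inj {i a b} : A i a -> A i b -> f i a = f i b -> a = b.
Proof. by move=> Aa Ab e; rewrite -(branch_invK Aa) -(branch_invK Ab) e. Qed.

Lemma preimage_branch i (S : set X) : S `<=` f i @` A i ->
  A i `&` f i @^-1` S = branch_inv i @` S.
Proof.
move=> Sf; apply/seteqP; split=> [x [Ax Sfx] | _ [y Sy <-]].
  by exists (f i x) => //; exact: branch_invK.
have fy := Sf y Sy.
by split; [exact: branch_inv_mem | rewrite /preimage /= branch_invV].
Qed.

Lemma partition_cover x : exists i, A i x.
Proof.
have : [set: X] x by [].
by rewrite -(proj2 (proj2 (proj2 pA))) => -[i _ Ax]; exists i.
Qed.

Lemma image_branch_cover {i y} :
  (f i @` A i) y -> exists k, A k `<=` f i @` A i /\ A k y.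
Proof.
have [J ->] := (proj1 (proj2 mA)) i.
by case=> k Jk Aky; exists k; split=> // z Az; exists k.
Qed.

Lemma bk_image {i x} : A i x -> bk A x -> bk A (f i x).
Proof. by move=> Ax bx; apply: (proj2 (proj2 mA) i); exists x. Qed.

Lemma notbk_partition_uniq {x i j} : ~ bk A x -> A i x -> A j x -> i = j.
Proof.
move=> nbx Aix Ajx; apply/eqP; apply: contrapT => /negP ij.
by apply: nbx; exists i, j.
Qed.

Lemma cyl_sub i w : cyl A f i w `<=` A i.
Proof. by case: w => [|j w] //= x []. Qed.

Lemma cyl_rcons_sub i w a : cyl A f i (rcons w a) `<=` cyl A f i w.
Proof. by elim: w i => [|j w IH] i /= x [Ax Pfx] //; split=> //; exact: IH. Qed.

Lemma cyl_extend {i w x} : admissible A f i w -> cyl A f i w x ->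
  exists a, admissible A f i (rcons w a) /\ cyl A f i (rcons w a) x.
Proof.
elim: w i x => [|j w IH] i x /=.
  move=> _ Ax; have [k [Ak Akx]] := image_branch_cover (ex_intro2 _ _ x Ax erefl).
  by exists k.
move=> [Aj ad] [Ax Pfx]; have [a [ad' P']] := IH j (f i x) ad Pfx.
by exists a.
Qed.

Lemma cyl_cover n x :
  exists i w, size w = n /\ admissible A f i w /\ cyl A f i w x.
Proof.
elim: n => [|n [i [w [sw [ad Px]]]]].
  by have [i Ax] := partition_cover x; exists i, [::].
have [a [ad' P']] := cyl_extend ad Px.
by exists i, (rcons w a); rewrite size_rcons sw.
Qed.

Lemma cyl_piece {i w} : admissible A f i w -> pieces A f (size w) (cyl A f i w).
Proof.
elim: w i => [|j w IH] i /=; first by move=> _; exists i.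
move=> [Aj ad]; exists i; exists (cyl A f j w); first exact: IH.
by split=> //; exact: subset_trans (@cyl_sub j w) Aj.
Qed.

Lemma connected_cyl {i w} : admissible A f i w -> connected (cyl A f i w).
Proof.
elim: w i => [|j w IH] i /=; first by move=> _; exact: (proj1 (proj2 pA)) i.
move=> [Aj ad]; have sub := subset_trans (@cyl_sub j w) Aj.
rewrite preimage_branch //; apply: connected_continuous_connected; first exact: IH.
exact: continuous_subspaceW sub (continuous_branch_inv i).
Qed.

(* A piece that is not a cylinder is cut out of a cylinder [cyl j w] by the
   image of a branch not containing [A j], hence lies in finitely many break
   points of [A]; being connected, it is then at most a point. *)
Lemma pieces_cyl_or_subset1 {n P} : pieces A f n P ->
  (exists i w, size w = n /\ admissible A f i w /\ P = cyl A f i w) \/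
  is_subset1 P.
Proof.
elim: n P => [|n IH] P /=; first by case=> i ->; left; exists i, [::].
case=> i [Q HQ [Qf ->]].
have pull : is_subset1 Q -> is_subset1 (A i `&` f i @^-1` Q).
  by move=> Q1 a b [Aa Qa] [Ab Qb]; apply: (branch_inj Aa Ab); exact: Q1.
have [[j [w [sw [ad eQ]]]] | Q1] := IH Q HQ; last by right; exact: pull.
have [Aj | nAj] := pselect (A j `<=` f i @` A i).
  by left; exists i, (j :: w); rewrite /= sw eQ.
right; apply: pull; rewrite eQ.
apply: (connected_finite_subset1 (hausdorff_accessible hX)); first exact: connected_cyl.
have [J eJ] := (proj1 (proj2 mA)) i.
apply: (@sub_finite_set _ _ (\bigcup_(k in J) (A j `&` A k))).
  move=> z Pz; have : (f i @` A i) z by apply: Qf; rewrite eQ.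
  by rewrite eJ => -[k Jk Akz]; exists k => //; split=> //; exact: (@cyl_sub j w).
apply: bigcup_finite; first exact: finite_finset.
move=> k Jk; apply: (proj1 (proj2 (proj2 pA))); apply/eqP => ejk.
by apply: nAj; rewrite eJ ejk => z Az; exists k.
Qed.

Lemma closed_piece {n P} : pieces A f n P -> closed P.
Proof.
elim: n P => [|n IH] P /=; first by case=> i ->; exact: (proj1 pA) i.
case=> i [Q HQ [Qf ->]]; rewrite preimage_branch //.
apply: compact_closed hX _; apply: continuous_compact.
  exact: continuous_subspaceW Qf (continuous_branch_inv i).
exact: subclosed_compact (IH _ HQ) cX _.
Qed.

Lemma finite_pieces n : finite_set (pieces A f n).
Proof.
elim: n => [|n IH] /=.
  apply: (@sub_finite_set _ _ (A @` [set: 'I_m])); last first.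
    exact: finite_image finite_finset.
  by move=> P [i ->]; exists i.
apply: sub_finite_set (finite_image2 (fun i Q => A i `&` f i @^-1` Q)
  (@finite_finset _ [set: 'I_m]) IH).
by move=> P [i [Q HQ [_ ->]]]; exists i => //; exists Q.
Qed.

Lemma finite_piecesI {n P P'} : pieces A f n P -> pieces A f n P' -> P <> P' ->
  finite_set (P `&` P').
Proof.
elim: n P P' => [|n IH] P P' /=.
  case=> i -> [j ->] ne; apply: (proj1 (proj2 (proj2 pA))).
  by apply/eqP => e; apply: ne; rewrite e.
case=> i [Q HQ [Qf ->]] [j [Q' HQ' [Q'f ->]]] ne.
have [eij | ij] := eqVneq i j; last first.
  apply: sub_finite_set ((proj1 (proj2 (proj2 pA))) i j ij).
  by move=> x [[Ax _] [Ax' _]].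
subst j; have neQ : Q <> Q' by move=> e; apply: ne; rewrite e.
apply: (@sub_finite_set _ _ (branch_inv i @` (Q `&` Q'))).
  by move=> x [[Ax Qx] [_ Q'x]]; exists (f i x) => //; exact: branch_invK.
exact: finite_image (IH _ _ HQ HQ' neQ).
Qed.

Lemma pieces_cover n x : exists P, pieces A f n P /\ P x.
Proof.
have [i [w [sw [ad Px]]]] := cyl_cover n x.
by exists (cyl A f i w); split=> //; rewrite -sw; exact: cyl_piece.
Qed.

Let other_pieces n P := [set Q | pieces A f n Q /\ Q <> P].

Lemma finite_piece_overlap {n P} : pieces A f n P ->
  finite_set (P `&` \bigcup_(Q in other_pieces n P) Q).
Proof.
move=> HP; rewrite setI_bigcupr; apply: bigcup_finite.
  by apply: sub_finite_set (finite_pieces n) => Q [].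
by move=> Q [HQ ne]; apply: (finite_piecesI HP HQ) => e; exact: ne (esym e).
Qed.

(* The other pieces form a closed set covering the complement of [P]. *)
Lemma piece_interior {n P x} : pieces A f n P -> P x ->
  ~ (\bigcup_(Q in other_pieces n P) Q) x -> P° x.
Proof.
move=> HP Px nQx.
have oG : open (~` \bigcup_(Q in other_pieces n P) Q).
  apply: closed_openC; apply: closed_bigcup.
    by apply: sub_finite_set (finite_pieces n) => Q [].
  by move=> Q [HQ _]; exact: closed_piece HQ.
apply: filterS (open_nbhs_nbhs (conj oG nQx)) => z nQz.
have [Q [HQ Qz]] := pieces_cover n z.
have [<- // | ne] := pselect (Q = P).
by exfalso; apply: nQz; exists Q.
Qed.

Hypothesis tA : top_expanding A f.

Lemma expanding_pieces_small y (e : R) : (0 < e)%R ->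
  exists n, forall P, pieces A f n P -> P y -> P `<=` ball y e.
Proof.
move=> e0; have [_ basis] := tA y.
have e20 : (0 < e / 2)%R by rewrite divr_gt0.
have [n Un] := basis _ (nbhsx_ballx y _ e20).
exists n => P HP Py z Pz; apply: contrapT => nz.
have [[i [w [_ [ad eP]]]] | P1] := pieces_cyl_or_subset1 HP; last first.
  by apply: nz; rewrite (P1 _ _ Pz Py); exact: ballxx.
pose O := ~` closed_ball y (e / 2).
have finPO : finite_set (P `&` O).
  apply: sub_finite_set (finite_piece_overlap HP) => z' [Pz' Oz'].
  split=> //; apply: contrapT => nQz'; apply: Oz'; apply: subset_closed_ball.
  apply: Un; apply: (@interiorS _ P); first by move=> u Pu; exists P.
  exact: piece_interior nQz'.
have Oz : O z by move=> /(subset_closure_half e0).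
have oO : open O by apply: closed_openC; exact: closed_ball_closed.
have cP : connected P by rewrite eP; exact: connected_cyl.
move: Py; rewrite (connected_open_finiteI_set1 (hausdorff_accessible hX)
  _ _ _ cP oO finPO Pz Oz).
by move=> yz; apply: nz; rewrite -yz; exact: ballxx.
Qed.

Lemma expanding_pieces_eq y y' :
  (forall n, exists P, pieces A f n P /\ P y /\ P y') -> y = y'.
Proof.
move=> common; apply: (close_eq hX); rewrite ball_close => e.
have [n small] := expanding_pieces_small y _ (gt0 e).
by have [P [HP [Py Py']]] := common n; exact: small HP Py _ Py'.
Qed.

Lemma self_conjugacy_id (Phi : X -> X) :
  (forall i x, A i x -> A i (Phi x)) ->
  (forall i x, A i x -> Phi (f i x) = f i (Phi x)) -> forall x, Phi x = x.
Proof.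
move=> PhiA Phif x.
have Phi_cyl w i z : cyl A f i w z -> cyl A f i w (Phi z).
  elim: w i z => [|j w IH] i z /=; first exact: PhiA.
  by move=> [Az Pfz]; split; [exact: PhiA | rewrite /preimage -Phif //; exact: IH].
symmetry; apply: expanding_pieces_eq => n.
have [i [w [sw [ad Px]]]] := cyl_cover n x.
exists (cyl A f i w); split; first by rewrite -sw; exact: cyl_piece.
by split=> //; exact: Phi_cyl.
Qed.

End MarkovMap.

Section Conjugacy.
Context {R : realType} {X : pseudoMetricType R} {m : nat}.
Context {A B : 'I_m -> set X} {f g : 'I_m -> X -> X}.
Hypotheses (hX : hausdorff_space X) (cX : compact [set: X]).
Hypotheses (pA : is_partition A) (pB : is_partition B).
Hypotheses (mA : is_markov A f) (mB : is_markov B g).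
Hypotheses (tA : top_expanding A f) (tB : top_expanding B g).
Hypothesis cAB : comb_conjugate A B f g.

Let Hc : X -> X := sval (cid cAB).

Let Hc_part i x : A i x -> B i (Hc x).
Proof.
rewrite /Hc; case: cid => H /= [_ [HA _]].
by move=> Ax; rewrite -HA; exists x.
Qed.

Let Hc_bk i x : A i x -> bk A x -> Hc (f i x) = g i (Hc x).
Proof. by rewrite /Hc; case: cid => H /= [_ [_ [Hbk _]]]; exact: Hbk. Qed.

Let matrix_AB i j : (A j `<=` f i @` A i) <-> (B j `<=` g i @` B i).
Proof. by case: cAB => H [_ [_ [_ Hmat]]]; exact: Hmat. Qed.

Lemma admissible_conj {i w} : admissible A f i w -> admissible B g i w.
Proof.
by elim: w i => [|j w IH] i //= [Aj ad]; split; [exact/matrix_AB | exact: IH].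
Qed.

Lemma admissible_cyl_image {i j w} : admissible A f i (j :: w) ->
  cyl B g j w `<=` g i @` B i.
Proof. by move=> [/matrix_AB Bj _]; apply: subset_trans Bj; exact: cyl_sub. Qed.

Lemma Hc_cyl_bk w i x : bk A x -> cyl A f i w x -> cyl B g i w (Hc x).
Proof.
elim: w i x => [|j w IH] i x /=; first by move=> _; exact: Hc_part.
move=> bx [Ax Pfx]; split; first exact: Hc_part.
by rewrite /preimage -Hc_bk //; apply: IH => //; exact: bk_image.
Qed.

Definition coded x y :=
  forall i w, admissible A f i w -> cyl A f i w x -> cyl B g i w y.

Definition part_of x : 'I_m := sval (cid (partition_cover pA x)).

Lemma part_ofP x : A (part_of x) x.
Proof. by rewrite /part_of; case: cid. Qed.

(* Off the break points the itinerary is pulled back along inverse branches of [g]. *)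
Fixpoint approx (n : nat) (x : X) : X :=
  if n is n'.+1 then
    if pselect (bk A x) then Hc x
    else branch_inv mB (part_of x) (approx n' (f (part_of x) x))
  else Hc x.

Lemma approx_cyl n x i w : size w = n -> admissible A f i w ->
  cyl A f i w x -> cyl B g i w (approx n x).
Proof.
elim: n x i w => [|n IH] x i [|j w] //=; first by move=> _ _; exact: Hc_part.
move=> [sw] ad [Ax Pfx].
case: pselect => [bx | nbx]; first exact: (Hc_cyl_bk (j :: w)).
rewrite -(notbk_partition_uniq nbx Ax (part_ofP x)).
have Bfx : cyl B g j w (approx n (f i x)) := IH _ _ _ sw ad.2 Pfx.
have img := admissible_cyl_image ad _ Bfx.
by split; [exact: branch_inv_mem | rewrite /preimage /= branch_invV].
Qed.

Lemma coded_exists x : exists y, coded x y.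
Proof.
pose C n := \bigcap_(p in [set p : 'I_m * seq 'I_m |
   size p.2 = n /\ admissible A f p.1 p.2 /\ cyl A f p.1 p.2 x]) cyl B g p.1 p.2.
have [y Cy] : exists y, forall n, C n y.
  apply: (compact_nested_closed C cX) => [n | n y Cy [i w] /= [sw [ad Px]] | n].
  - apply: closed_bigI => -[i w] /= [sw [ad _]].
    apply: (closed_piece hX cX pB mB); exact: cyl_piece (admissible_conj ad).
  - have [a [ad' Px']] := cyl_extend mA ad Px.
    by apply: cyl_rcons_sub (Cy (i, rcons w a) _); rewrite /= size_rcons sw.
  - by exists (approx n x) => -[i w] /= [sw [ad Px]]; exact: approx_cyl.
by exists y => i w ad Px; exact: (Cy (size w) (i, w)).
Qed.

Lemma coded_uniq x y y' : coded x y -> coded x y' -> y = y'.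
Proof.
move=> cy cy'; apply: (expanding_pieces_eq hX cX pB mB tB) => n.
have [i [w [sw [ad Px]]]] := cyl_cover pA mA n x.
exists (cyl B g i w); split; first by rewrite -sw; exact: cyl_piece (admissible_conj ad).
by split; [exact: cy | exact: cy'].
Qed.

Definition conj_map x := sval (cid (coded_exists x)).

Lemma conj_map_coded x : coded x (conj_map x).
Proof. by rewrite /conj_map; case: cid. Qed.

Lemma conj_map_eq {x y} : coded x y -> conj_map x = y.
Proof. by move=> cy; apply: coded_uniq cy; exact: conj_map_coded. Qed.

Lemma conj_map_part {i x} : A i x -> B i (conj_map x).
Proof. by move=> Ax; exact: (conj_map_coded x i [::] I Ax). Qed.

Lemma conj_map_bk x : bk A x -> conj_map x = Hc x.
Proof. by move=> bx; apply: conj_map_eq => i w _; exact: Hc_cyl_bk. Qed.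

Lemma conj_map_image {i x} : A i x -> (g i @` B i) (conj_map (f i x)).
Proof.
move=> Ax; have [k [Ak Akf]] := image_branch_cover mA (ex_intro2 _ _ x Ax erefl).
exact: (proj1 (matrix_AB i k)) Ak _ (conj_map_part Akf).
Qed.

Lemma coded_branch_inv {i x} : A i x -> ~ bk A x ->
  coded x (branch_inv mB i (conj_map (f i x))).
Proof.
move=> Ax nbx j w ad Px.
have ej : j = i by apply: (notbk_partition_uniq nbx) => //; exact: cyl_sub Px.
subst j; have img := conj_map_image Ax.
case: w ad Px => [|k w] ad /= Px; first exact: branch_inv_mem.
split; first exact: branch_inv_mem.
by rewrite /preimage branch_invV //; apply: conj_map_coded (proj2 ad) (proj2 Px).
Qed.

Lemma conj_map_conj i x : A i x -> conj_map (f i x) = g i (conj_map x).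
Proof.
move=> Ax; have [bx | nbx] := pselect (bk A x).
  by rewrite !conj_map_bk ?Hc_bk //; exact: bk_image.
by rewrite (conj_map_eq (coded_branch_inv Ax nbx)) branch_invV //; exact: conj_map_image.
Qed.

Lemma continuous_conj_map : continuous conj_map.
Proof.
move=> x V /nbhs_ballP [e e0 sV].
have [n small] := expanding_pieces_small hX cX pB mB tB (conj_map x) _ e0.
have [Un _] := tA x.
apply: filterS (Un n) => x' /interior_subset [P [HP Px] Px']; apply: sV.
have [[i [w [sw [ad eP]]]] | P1] := pieces_cyl_or_subset1 hX pA mA HP; last first.
  by rewrite (P1 _ _ Px' Px); exact: ballxx.
rewrite eP in Px Px'.
apply: (small (cyl B g i w)); first by rewrite -sw; exact: cyl_piece (admissible_conj ad).
all: exact: conj_map_coded.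
Qed.

Lemma comb_conjugate_semiconj : exists H : X -> X, continuous H /\
  (forall i x, A i x -> B i (H x)) /\ (forall i x, A i x -> H (f i x) = g i (H x)).
Proof.
exists conj_map; split; first exact: continuous_conj_map.
by split; [exact: @conj_map_part | exact: conj_map_conj].
Qed.

End Conjugacy.

Theorem proposition2p6 (R : realType) (X : pseudoMetricType R) (m : nat)
  (A B : 'I_m -> set X) (f g : 'I_m -> X -> X) :
  hausdorff_space X -> compact [set: X] ->
  is_partition A -> is_partition B ->
  is_markov A f -> is_markov B g ->
  top_expanding A f -> top_expanding B g ->
  comb_conjugate A B f g ->
  exists H : X -> X, homeomorphism H /\
    (forall i x, A i x -> H (f i x) = g i (H x)).
Proof.
move=> hX cX pA pB mA mB tA tB cAB.
have [H [cH [HAB Hfg]]] := comb_conjugate_semiconj hX cX pA pB mA mB tA tB cAB.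
have [K [cK [KBA Kgf]]] :=
  comb_conjugate_semiconj hX cX pB pA mB mA tB tA (comb_conjugate_sym cAB).
exists H; split=> //; split=> //; exists K; do 2!split=> //.
- apply: (self_conjugacy_id hX cX pA mA tA) => i x Ax; first exact/KBA/HAB.
  by rewrite Hfg // Kgf //; exact: HAB.
- apply: (self_conjugacy_id hX cX pB mB tB) => i x Bx; first exact/HAB/KBA.
  by rewrite Kgf // Hfg //; exact: KBA.
Qed.
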